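(* There exist constants $a,b>0$ such that for every integer $R\ge2$, $$\frac{a}{R}<\pi-\Vert T_R\Vert<\frac{b\log R}{R}.$$
   Context: $T_R$ is the $R\times R$ matrix with $(T_R)_{m,n}=0$ if $m=n$ and $(T_R)_{m,n}=\frac{1}{m-n}$ if $m\ne n$, $1\le m,n\le R$. $\Vert\cdot\Vert$ is the operator norm induced by the Euclidean norm on $\mathbb{C}^R$. *)

From Stdlib Require Import Reals.
Open Scope R_scope.

Fixpoint sum1 (N : nat) (f : nat -> R) : R :=
  match N with
  | O => 0
  | S k => sum1 k f + f (S k)
  end.

(* Entry (m,n) of T_N: 0 on the diagonal, 1/(m-n) otherwise (indices 1..N). *)
Definition Tent (m n : nat) : R :=
  if Nat.eqb m n then 0 else / (INR m - INR n).

(* Complex numbers as pairs (real part, imaginary part);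
   a vector of C^N is given by its coordinates at indices 1..N. *)
Definition cvec := nat -> (R * R).

Definition cnorm (N : nat) (z : cvec) : R :=
  sqrt (sum1 N (fun n => fst (z n) ^ 2 + snd (z n) ^ 2)).

Definition Tapply (N : nat) (z : cvec) : cvec :=
  fun m => (sum1 N (fun n => Tent m n * fst (z n)),
            sum1 N (fun n => Tent m n * snd (z n))).

(* The set { ||T_N z|| : ||z|| <= 1 }; the operator norm is its supremum. *)
Definition T_image_norms (N : nat) (r : R) : Prop :=
  exists z : cvec, cnorm N z <= 1 /\ r = cnorm N (Tapply N z).

(* Vectors z of C^N are attached to trigonometric polynomials P_z(t) = sum_n z_n e(n t),
   e(x) = exp(2 i pi x).  Parseval gives  int_0^1 |P_z|^2 = ||z||^2, and integrating
   (1/2 - t) e(k t) gives the moment identity  int_0^1 (1/2 - t) |P_z(t)|^2 dt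
   = <Re z, T_N Im z> / pi.
   - Upper bound.  As |P_z|^2 <= N ||z||^2, the weight 1/2 - t exceeds 1/2 - 1/(4N) only on
     a short interval, so <u, T_N v> <= K/2 (|u|^2 + |v|^2) with K = pi (1 - 3/(8N)),
     which gives ||T_N|| <= K.
   - Lower bound.  For P_z(t) = e(t) D_L(t - 3/L)^m, with D_L the Dirichlet kernel, |P_z|^2
     is concentrated near 3/L, so its first moment is at most eps ||z||^2 with
     eps = 6/L + 4 L (4/9)^m; by Cauchy-Schwarz ||T_N|| >= pi (1 - 2 eps).  Taking
     m = 2 (log2 N + 1) and L about N/m makes eps = O(log N / N). *)
From Stdlib Require Import Reals Lra Lia.
From Coquelicot Require Import Coquelicot.
Open Scope R_scope.

Lemma sum1_ext N f g :
  (forall n, (1 <= n <= N)%nat -> f n = g n) -> sum1 N f = sum1 N g.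
Proof.
  induction N as [|N IH]; simpl; intros H; auto.
  rewrite IH, H; auto; [lia|]. intros; apply H; lia.
Qed.

Lemma sum1_plus N f g : sum1 N (fun n => f n + g n) = sum1 N f + sum1 N g.
Proof. induction N; simpl; [ring|rewrite IHN; ring]. Qed.

Lemma sum1_minus N f g : sum1 N (fun n => f n - g n) = sum1 N f - sum1 N g.
Proof. induction N; simpl; [ring|rewrite IHN; ring]. Qed.

Lemma sum1_scal N c f : sum1 N (fun n => c * f n) = c * sum1 N f.
Proof. induction N; simpl; [ring|rewrite IHN; ring]. Qed.

Lemma sum1_scal_r N c f : sum1 N (fun n => f n * c) = sum1 N f * c.
Proof. induction N; simpl; [ring|rewrite IHN; ring]. Qed.

Lemma sum1_opp N f : sum1 N (fun n => - f n) = - sum1 N f.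
Proof. induction N; simpl; [ring|rewrite IHN; ring]. Qed.

Lemma sum1_const N c : sum1 N (fun _ => c) = INR N * c.
Proof. induction N; simpl sum1; [simpl; ring|rewrite IHN, S_INR; ring]. Qed.

Lemma sum1_zero N f : (forall n, (1 <= n <= N)%nat -> f n = 0) -> sum1 N f = 0.
Proof. intros H. rewrite (sum1_ext N f (fun _ => 0)), sum1_const; auto. ring. Qed.

Lemma sum1_le N f g :
  (forall n, (1 <= n <= N)%nat -> f n <= g n) -> sum1 N f <= sum1 N g.
Proof.
  induction N as [|N IH]; simpl; intros H; [lra|].
  assert (sum1 N f <= sum1 N g) by (apply IH; intros; apply H; lia).
  assert (f (S N) <= g (S N)) by (apply H; lia). lra.
Qed.

Lemma sum1_nonneg N f : (forall n, (1 <= n <= N)%nat -> 0 <= f n) -> 0 <= sum1 N f.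
Proof.
  intros H. apply Rle_trans with (sum1 N (fun _ => 0)).
  - rewrite sum1_const; lra.
  - now apply sum1_le.
Qed.

Lemma sum1_split d k f : sum1 (d + k) f = sum1 d f + sum1 k (fun n => f (d + n)%nat).
Proof.
  induction k as [|k IH]; simpl.
  - rewrite Nat.add_0_r; ring.
  - rewrite <- plus_n_Sm. simpl. rewrite IH. ring.
Qed.

Lemma sum1_swap N M (f : nat -> nat -> R) :
  sum1 N (fun m => sum1 M (fun n => f m n)) = sum1 M (fun n => sum1 N (fun m => f m n)).
Proof.
  induction N as [|N IH]; simpl.
  - symmetry; now apply sum1_zero.
  - now rewrite IH, <- sum1_plus.
Qed.

Lemma sum1_mul N M f g :
  sum1 N f * sum1 M g = sum1 N (fun m => sum1 M (fun n => f m * g n)).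
Proof. induction N; simpl; [ring|]. rewrite <- IHN, sum1_scal. ring. Qed.

Lemma sum1_delta N m (f : nat -> R) : (1 <= m <= N)%nat ->
  sum1 N (fun n => f n * (if Nat.eqb m n then 1 else 0)) = f m.
Proof.
  induction N as [|N IH]; intros H; [lia|]. simpl.
  destruct (Nat.eqb_spec m (S N)) as [->|Hne].
  - rewrite sum1_zero; [ring|]. intros n Hn.
    destruct (Nat.eqb_spec (S N) n); [lia|ring].
  - rewrite IH; [ring|lia].
Qed.

Lemma sum1_telescope L (f : nat -> R) : sum1 L (fun j => f (S j) - f j) = f (S L) - f 1%nat.
Proof. induction L; simpl; [ring|rewrite IHL; ring]. Qed.

(* A Cauchy-Schwarz step: the cross term of two vectors is controlled
   by the product of their squared norms (an AM-GM inequality). *)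
Lemma cross_term_le x X a b A B :
  0 <= a -> 0 <= b -> 0 <= A -> 0 <= B -> x ^ 2 <= a * b -> X ^ 2 <= A * B ->
  2 * x * X <= A * b + a * B.
Proof.
  intros Ha Hb HA HB Hx HX.
  assert (x ^ 2 * X ^ 2 <= (a * b) * (A * B))
    by (apply Rmult_le_compat; auto using pow2_ge_0).
  pose proof (pow2_ge_0 (A * b - a * B)).
  assert (0 <= A * b + a * B) by nra.
  destruct (Rle_or_lt (2 * x * X) 0); nra.
Qed.

Lemma cauchy_schwarz N a b c d :
  (sum1 N (fun n => a n * c n + b n * d n)) ^ 2 <=
  sum1 N (fun n => a n ^ 2 + b n ^ 2) * sum1 N (fun n => c n ^ 2 + d n ^ 2).
Proof.
  induction N as [|N IH]; cbn [sum1]; [nra|].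
  set (X := sum1 N (fun n => a n * c n + b n * d n)) in *.
  set (A := sum1 N (fun n => a n ^ 2 + b n ^ 2)) in *.
  set (B := sum1 N (fun n => c n ^ 2 + d n ^ 2)) in *.
  assert (0 <= A) by (apply sum1_nonneg; intros; nra).
  assert (0 <= B) by (apply sum1_nonneg; intros; nra).
  set (p := a (S N)); set (q := b (S N)); set (r := c (S N)); set (s := d (S N)).
  assert (Hloc : (p * r + q * s) ^ 2 <= (p ^ 2 + q ^ 2) * (r ^ 2 + s ^ 2))
    by (pose proof (pow2_ge_0 (p * s - q * r)); nra).
  pose proof (cross_term_le (p * r + q * s) X (p ^ 2 + q ^ 2) (r ^ 2 + s ^ 2) A B).
  assert (0 <= p ^ 2 + q ^ 2) by nra. assert (0 <= r ^ 2 + s ^ 2) by nra.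
  nra.
Qed.

Lemma sum_sq_le N f : (sum1 N f) ^ 2 <= INR N * sum1 N (fun n => f n ^ 2).
Proof.
  pose proof (cauchy_schwarz N f (fun _ => 0) (fun _ => 1) (fun _ => 0)) as H.
  cbv beta in H.
  rewrite (sum1_ext N (fun n => f n * 1 + 0 * 0) f),
          (sum1_ext N (fun n => f n ^ 2 + 0 ^ 2) (fun n => f n ^ 2)),
          (sum1_ext N (fun _ => 1 ^ 2 + 0 ^ 2) (fun _ => 1)), sum1_const in H
    by (intros; ring).
  lra.
Qed.

Definition cadd (a b : R * R) : R * R := (fst a + fst b, snd a + snd b).
Definition cmul (a b : R * R) : R * R :=
  (fst a * fst b - snd a * snd b, fst a * snd b + snd a * fst b).
Definition cn2 (a : R * R) : R := fst a ^ 2 + snd a ^ 2.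
Fixpoint cpow (q : R * R) (m : nat) : R * R :=
  match m with O => (1, 0) | S k => cmul (cpow q k) q end.

Lemma pair_ext (p q : R * R) : fst p = fst q -> snd p = snd q -> p = q.
Proof. destruct p, q; simpl; intros; subst; auto. Qed.

Lemma cn2_nonneg a : 0 <= cn2 a.
Proof. unfold cn2. pose proof (pow2_ge_0 (fst a)). pose proof (pow2_ge_0 (snd a)). lra. Qed.

Lemma cn2_mul a b : cn2 (cmul a b) = cn2 a * cn2 b.
Proof. unfold cn2, cmul; simpl. ring. Qed.

Lemma cn2_pow q m : cn2 (cpow q m) = cn2 q ^ m.
Proof. induction m; simpl; [unfold cn2; simpl; ring|rewrite cn2_mul, IHm; ring]. Qed.

Lemma cmul_cadd_r a b c : cmul a (cadd b c) = cadd (cmul a b) (cmul a c).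
Proof. unfold cmul, cadd; apply pair_ext; simpl; ring. Qed.

Lemma cmul_assoc a b c : cmul (cmul a b) c = cmul a (cmul b c).
Proof. unfold cmul; apply pair_ext; simpl; ring. Qed.

(** * Trigonometric polynomials [P_z(t) = sum_n z_n e(n t)], [e(x) = exp(2 i pi x)] *)

Definition phase (n : nat) (t : R) : R := 2 * PI * INR n * t.

Definition expo (n : nat) (t : R) : R * R := (cos (phase n t), sin (phase n t)).

Definition tpoly (z : cvec) (N : nat) (t : R) : R * R :=
  (sum1 N (fun n => fst (z n) * cos (phase n t) - snd (z n) * sin (phase n t)),
   sum1 N (fun n => fst (z n) * sin (phase n t) + snd (z n) * cos (phase n t))).

Definition tabs2 (z : cvec) (N : nat) (t : R) : R := cn2 (tpoly z N t).

Definition csq (N : nat) (z : cvec) : R := sum1 N (fun n => fst (z n) ^ 2 + snd (z n) ^ 2).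

Lemma phase_add a b t : phase (a + b) t = phase a t + phase b t.
Proof. unfold phase. rewrite plus_INR. ring. Qed.

Lemma cn2_expo n t : cn2 (expo n t) = 1.
Proof. unfold cn2, expo; simpl. pose proof (sin2_cos2 (phase n t)). unfold Rsqr in *. lra. Qed.

Lemma csq_nonneg N z : 0 <= csq N z.
Proof. apply sum1_nonneg. intros n _. apply (cn2_nonneg (z n)). Qed.

Lemma tabs2_nonneg z N t : 0 <= tabs2 z N t.
Proof. apply cn2_nonneg. Qed.

Lemma tabs2_le z N t : tabs2 z N t <= INR N * csq N z.
Proof.
  unfold tabs2, cn2, tpoly, csq; cbn [fst snd].
  pose proof (sum_sq_le N (fun n => fst (z n) * cos (phase n t) - snd (z n) * sin (phase n t))).
  pose proof (sum_sq_le N (fun n => fst (z n) * sin (phase n t) + snd (z n) * cos (phase n t))).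
  replace (sum1 N (fun n => fst (z n) ^ 2 + snd (z n) ^ 2)) with
    (sum1 N (fun n => (fst (z n) * cos (phase n t) - snd (z n) * sin (phase n t)) ^ 2) +
     sum1 N (fun n => (fst (z n) * sin (phase n t) + snd (z n) * cos (phase n t)) ^ 2)).
  - lra.
  - rewrite <- sum1_plus. apply sum1_ext. intros n _.
    pose proof (sin2_cos2 (phase n t)) as Hsc. unfold Rsqr in Hsc.
    transitivity ((fst (z n) ^ 2 + snd (z n) ^ 2) *
                  (sin (phase n t) * sin (phase n t) + cos (phase n t) * cos (phase n t)));
      [ring|]. rewrite Hsc. ring.
Qed.

Lemma continuous_plus_R (f g : R -> R) x :
  continuous f x -> continuous g x -> continuous (fun t => f t + g t) x.
Proof. intros; now apply (continuous_plus f g x). Qed.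

Lemma continuous_mult_R (f g : R -> R) x :
  continuous f x -> continuous g x -> continuous (fun t => f t * g t) x.
Proof. intros; now apply (continuous_mult f g x). Qed.

Lemma continuous_ext_R (f g : R -> R) x :
  (forall t, f t = g t) -> continuous f x -> continuous g x.
Proof. apply (continuous_ext f g x). Qed.

Lemma continuous_of_derivable (f : R -> R) x : ex_derive f x -> continuous f x.
Proof. apply (ex_derive_continuous f). Qed.

Lemma continuous_sum1 N (f : nat -> R -> R) x :
  (forall n, continuous (f n) x) -> continuous (fun t => sum1 N (fun n => f n t)) x.
Proof.
  intros Hf. induction N as [|N IH]; simpl.
  - apply (continuous_const (U := R_UniformSpace) (0 : R)).
  - now apply (continuous_plus_R (fun t => sum1 N (fun n => f n t)) (f (S N))).
Qed.

Lemma tabs2_continuous z N x : continuous (tabs2 z N) x.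
Proof.
  assert (Hre : continuous (fun t => fst (tpoly z N t)) x).
  { apply continuous_sum1. intros n. apply continuous_of_derivable. unfold phase. auto_derive. auto. }
  assert (Him : continuous (fun t => snd (tpoly z N t)) x).
  { apply continuous_sum1. intros n. apply continuous_of_derivable. unfold phase. auto_derive. auto. }
  apply (continuous_ext_R (fun t => fst (tpoly z N t) * fst (tpoly z N t) +
                                  snd (tpoly z N t) * snd (tpoly z N t)) (tabs2 z N)).
  - intros t. unfold tabs2, cn2. ring.
  - apply (continuous_plus_R (fun t => fst (tpoly z N t) * fst (tpoly z N t)));
      apply (continuous_mult_R (fun t => _)); auto.
Qed.

Lemma is_RInt_antiderivative (F f : R -> R) a b I :
  (forall x, is_derive F x (f x)) -> (forall x, ex_derive f x) ->
  F b - F a = I -> is_RInt f a b I.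
Proof.
  intros HF Hf <-.
  replace (F b - F a) with (minus (F b) (F a)) by reflexivity.
  apply (is_RInt_derive F f); intros x _; auto.
  now apply continuous_of_derivable.
Qed.

Definition freq (m n : nat) : R := 2 * PI * (INR m - INR n).

Lemma freq_nonzero m n : m <> n -> freq m n <> 0.
Proof.
  intros H E. unfold freq in E. pose proof PI_RGT_0.
  assert (INR m - INR n = 0) by nra. apply H, INR_eq. lra.
Qed.

Lemma freq_periodic m n : sin (freq m n) = 0 /\ cos (freq m n) = 1.
Proof.
  assert (Hs : forall k, sin (2 * PI * INR k) = 0).
  { intros k. rewrite <- sin_0, <- (sin_period 0 k). f_equal. ring. }
  assert (Hc : forall k, cos (2 * PI * INR k) = 1).
  { intros k. rewrite <- cos_0, <- (cos_period 0 k). f_equal. ring. }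
  unfold freq. replace (2 * PI * (INR m - INR n)) with (2 * PI * INR m - 2 * PI * INR n) by ring.
  rewrite sin_minus, cos_minus, !Hs, !Hc. split; ring.
Qed.

Section NonzeroFrequency.
(* A nonzero frequency c that is a multiple of 2 pi. *)
Variable c : R.
Hypothesis c_nonzero : c <> 0.
Hypothesis sin_c : sin c = 0.
Hypothesis cos_c : cos c = 1.

Lemma RInt_cos_freq : is_RInt (fun t => cos (c * t)) 0 1 0.
Proof.
  apply (is_RInt_antiderivative (fun t => sin (c * t) / c)).
  - intros x. auto_derive; auto. field. auto.
  - intros x. auto_derive. auto.
  - rewrite Rmult_1_r, Rmult_0_r, sin_0, sin_c. field. auto.
Qed.

Lemma RInt_sin_freq : is_RInt (fun t => sin (c * t)) 0 1 0.
Proof.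
  apply (is_RInt_antiderivative (fun t => - cos (c * t) / c)).
  - intros x. auto_derive; auto. field. auto.
  - intros x. auto_derive. auto.
  - rewrite Rmult_1_r, Rmult_0_r, cos_0, cos_c. field. auto.
Qed.

Lemma RInt_wcos_freq : is_RInt (fun t => (1/2 - t) * cos (c * t)) 0 1 0.
Proof.
  apply (is_RInt_antiderivative (fun t => (1/2 - t) * sin (c * t) / c - cos (c * t) / (c * c))).
  - intros x. auto_derive; auto. field. auto.
  - intros x. auto_derive. auto.
  - rewrite Rmult_1_r, Rmult_0_r, cos_0, sin_0, cos_c, sin_c. field. auto.
Qed.

Lemma RInt_wsin_freq : is_RInt (fun t => (1/2 - t) * sin (c * t)) 0 1 (1 / c).
Proof.
  apply (is_RInt_antiderivative (fun t => - (1/2 - t) * cos (c * t) / c - sin (c * t) / (c * c))).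
  - intros x. auto_derive; auto. field. auto.
  - intros x. auto_derive. auto.
  - rewrite Rmult_1_r, Rmult_0_r, cos_0, sin_0, cos_c, sin_c. field. auto.
Qed.

End NonzeroFrequency.

Lemma RInt_const_01 (c : R) : is_RInt (fun _ => c) 0 1 c.
Proof.
  apply (is_RInt_antiderivative (fun t => c * t)).
  - intros x. auto_derive; auto. ring.
  - intros x. auto_derive. auto.
  - ring.
Qed.

Lemma RInt_cos_diff m n : is_RInt (fun t => cos (freq m n * t)) 0 1 (if Nat.eqb m n then 1 else 0).
Proof.
  destruct (Nat.eqb_spec m n) as [->|Hne].
  - eapply is_RInt_ext; [|apply RInt_const_01]. intros x _.
    unfold freq. rewrite Rminus_diag, Rmult_0_r, Rmult_0_l. now rewrite cos_0.
  - destruct (freq_periodic m n). apply RInt_cos_freq; auto. now apply freq_nonzero.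
Qed.

Lemma RInt_sin_diff m n : is_RInt (fun t => sin (freq m n * t)) 0 1 0.
Proof.
  destruct (Nat.eqb_spec m n) as [->|Hne].
  - eapply is_RInt_ext; [|apply RInt_const_01]. intros x _.
    unfold freq. rewrite Rminus_diag, Rmult_0_r, Rmult_0_l. now rewrite sin_0.
  - destruct (freq_periodic m n). apply RInt_sin_freq; auto. now apply freq_nonzero.
Qed.

Lemma RInt_wcos_diff m n : is_RInt (fun t => (1/2 - t) * cos (freq m n * t)) 0 1 0.
Proof.
  destruct (Nat.eqb_spec m n) as [->|Hne].
  - apply (is_RInt_antiderivative (fun t => t / 2 - t * t / 2)).
    + intros x. unfold freq. rewrite Rminus_diag, Rmult_0_r, Rmult_0_l, cos_0.
      auto_derive; auto. field.
    + intros x. auto_derive. auto.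
    + field.
  - destruct (freq_periodic m n). apply RInt_wcos_freq; auto. now apply freq_nonzero.
Qed.

(* The integral that produces the entries of T: it is Tent m n / (2 pi). *)
Lemma RInt_wsin_diff m n :
  is_RInt (fun t => (1/2 - t) * sin (freq m n * t)) 0 1 (Tent m n / (2 * PI)).
Proof.
  pose proof PI_neq0. unfold Tent.
  destruct (Nat.eqb_spec m n) as [->|Hne].
  - replace (0 / (2 * PI)) with 0 by (field; auto).
    eapply is_RInt_ext; [|apply RInt_const_01].
    intros x _. unfold freq. rewrite Rminus_diag, Rmult_0_r, Rmult_0_l, sin_0. symmetry; apply Rmult_0_r.
  - destruct (freq_periodic m n).
    replace (/ (INR m - INR n) / (2 * PI)) with (1 / freq m n).
    + apply RInt_wsin_freq; auto. now apply freq_nonzero.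
    + assert (INR m - INR n <> 0) by (intro E; apply Hne, INR_eq; lra).
      unfold freq. field. auto.
Qed.

(** * Parseval's identity and the moment identity *)

Lemma is_RInt_scal_R (f : R -> R) a b c I : is_RInt f a b I -> is_RInt (fun t => c * f t) a b (c * I).
Proof. apply (is_RInt_scal f a b c I). Qed.

Lemma is_RInt_plus_R (f g : R -> R) a b I J :
  is_RInt f a b I -> is_RInt g a b J -> is_RInt (fun t => f t + g t) a b (I + J).
Proof. apply (is_RInt_plus f g a b I J). Qed.

Lemma is_RInt_minus_R (f g : R -> R) a b I J :
  is_RInt f a b I -> is_RInt g a b J -> is_RInt (fun t => f t - g t) a b (I - J).
Proof. apply (is_RInt_minus f g a b I J). Qed.

Lemma is_RInt_ext_R (f g : R -> R) a b I :
  (forall x, f x = g x) -> is_RInt f a b I -> is_RInt g a b I.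
Proof. intros H. apply is_RInt_ext. intros; apply H. Qed.

Lemma is_RInt_const_R (c : R) a b : is_RInt (fun _ => c) a b ((b - a) * c).
Proof. apply (is_RInt_const a b c). Qed.

Lemma is_RInt_sum1 N (f : nat -> R -> R) (I : nat -> R) a b :
  (forall n, is_RInt (f n) a b (I n)) ->
  is_RInt (fun t => sum1 N (fun n => f n t)) a b (sum1 N I).
Proof.
  intros H. induction N as [|N IH]; simpl.
  - pose proof (is_RInt_const_R 0 a b) as H0. now rewrite Rmult_0_r in H0.
  - now apply is_RInt_plus_R.
Qed.

(* The real part of z_m conj(z_n) e((m - n) t). *)
Definition cross (z : cvec) (m n : nat) (t : R) : R :=
  (fst (z m) * fst (z n) + snd (z m) * snd (z n)) * cos (freq m n * t)
  + (fst (z m) * snd (z n) - snd (z m) * fst (z n)) * sin (freq m n * t).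

Lemma tabs2_expand z N t : tabs2 z N t = sum1 N (fun m => sum1 N (fun n => cross z m n t)).
Proof.
  unfold tabs2, cn2, tpoly; cbn [fst snd].
  assert (Hsq : forall x : R, x ^ 2 = x * x) by (intros; ring).
  rewrite !Hsq, !sum1_mul, <- sum1_plus.
  apply sum1_ext; intros m _. rewrite <- sum1_plus. apply sum1_ext; intros n _.
  unfold cross. replace (freq m n * t) with (phase m t - phase n t) by (unfold freq, phase; ring).
  rewrite cos_minus, sin_minus. ring.
Qed.

Lemma parseval z N : is_RInt (tabs2 z N) 0 1 (csq N z).
Proof.
  eapply is_RInt_ext. { intros x _. symmetry. apply tabs2_expand. }
  replace (csq N z) with (sum1 N (fun m => sum1 N (fun n =>
     (fst (z m) * fst (z n) + snd (z m) * snd (z n)) * (if Nat.eqb m n then 1 else 0)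
     + (fst (z m) * snd (z n) - snd (z m) * fst (z n)) * 0))).
  - apply is_RInt_sum1; intros m; apply is_RInt_sum1; intros n.
    apply is_RInt_plus_R; apply is_RInt_scal_R; [apply RInt_cos_diff|apply RInt_sin_diff].
  - symmetry. apply sum1_ext; intros m Hm.
    transitivity (fst (z m) * fst (z m) + snd (z m) * snd (z m)); [ring|].
    rewrite <- (sum1_delta N m (fun n => fst (z m) * fst (z n) + snd (z m) * snd (z n))) by auto.
    apply sum1_ext; intros n _. ring.
Qed.

Definition re (z : cvec) (n : nat) : R := fst (z n).
Definition im (z : cvec) (n : nat) : R := snd (z n).
Definition Tv (N : nat) (x : nat -> R) (m : nat) : R := sum1 N (fun n => Tent m n * x n).

Definition tform (N : nat) (u v : nat -> R) : R := sum1 N (fun m => u m * Tv N v m).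

Lemma Tent_anti m n : Tent n m = - Tent m n.
Proof.
  unfold Tent. rewrite Nat.eqb_sym. destruct (Nat.eqb_spec m n) as [|Hne]; [ring|].
  assert (INR m - INR n <> 0) by (intro E; apply Hne, INR_eq; lra).
  replace (INR n - INR m) with (- (INR m - INR n)) by ring. field; auto.
Qed.

Lemma tform_anti N u v : tform N v u = - tform N u v.
Proof.
  unfold tform, Tv.
  transitivity (sum1 N (fun m => sum1 N (fun n => v m * Tent m n * u n))).
  { apply sum1_ext; intros. rewrite <- sum1_scal. apply sum1_ext; intros; ring. }
  rewrite sum1_swap, <- sum1_opp. apply sum1_ext; intros.
  rewrite <- sum1_scal, <- sum1_opp. apply sum1_ext; intros. rewrite Tent_anti. ring.
Qed.

Lemma moment_identity z N :
  is_RInt (fun t => (1/2 - t) * tabs2 z N t) 0 1 (tform N (re z) (im z) / PI).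
Proof.
  pose proof PI_neq0.
  apply (is_RInt_ext (fun x => sum1 N (fun m => sum1 N (fun n =>
     (fst (z m) * fst (z n) + snd (z m) * snd (z n)) * ((1/2 - x) * cos (freq m n * x)) +
     (fst (z m) * snd (z n) - snd (z m) * fst (z n)) * ((1/2 - x) * sin (freq m n * x)))))).
  { intros x _. rewrite tabs2_expand, <- sum1_scal. apply sum1_ext; intros m _.
    rewrite <- sum1_scal. apply sum1_ext; intros n _. unfold cross. ring. }
  replace (tform N (re z) (im z) / PI) with (sum1 N (fun m => sum1 N (fun n =>
     (fst (z m) * fst (z n) + snd (z m) * snd (z n)) * 0 +
     (fst (z m) * snd (z n) - snd (z m) * fst (z n)) * (Tent m n / (2 * PI))))).
  - apply is_RInt_sum1; intros m; apply is_RInt_sum1; intros n.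
    apply is_RInt_plus_R; apply is_RInt_scal_R; [apply RInt_wcos_diff|apply RInt_wsin_diff].
  - replace (tform N (re z) (im z) / PI) with
      ((tform N (re z) (im z) - tform N (im z) (re z)) / (2 * PI))
      by (rewrite tform_anti; field; auto).
    unfold tform, Tv, re, im, Rdiv. rewrite <- sum1_minus, <- sum1_scal_r.
    apply sum1_ext; intros m _.
    rewrite <- !sum1_scal, <- sum1_minus, <- sum1_scal_r. apply sum1_ext; intros n _. ring.
Qed.

Lemma is_RInt_split (f : R -> R) a b c I :
  (forall x, continuous f x) -> is_RInt f a c I ->
  exists I1 I2 : R, is_RInt f a b I1 /\ is_RInt f b c I2 /\ I = I1 + I2.
Proof.
  intros Hf H.
  assert (Hex : forall u v, is_RInt f u v (RInt f u v)).
  { intros u v. apply (RInt_correct (V := R_CompleteNormedModule)).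
    apply (ex_RInt_continuous (V := R_CompleteNormedModule)). intros; apply Hf. }
  exists (RInt f a b), (RInt f b c). split; [|split]; auto.
  rewrite <- (is_RInt_unique (V := R_CompleteNormedModule) f a c I H).
  apply (is_RInt_unique (V := R_CompleteNormedModule)).
  apply (is_RInt_Chasles f a b c); auto.
Qed.

Lemma is_RInt_ge0 (f : R -> R) a b I :
  a <= b -> is_RInt f a b I -> (forall x, 0 <= f x) -> 0 <= I.
Proof.
  intros Hab H Hf. apply (is_RInt_le (fun _ => 0) f a b 0 I); auto.
  pose proof (is_RInt_const_R 0 a b) as H0. now rewrite Rmult_0_r in H0.
Qed.

Section Moments.
Variable G : R -> R.
Hypothesis G_continuous : forall x, continuous G x.
Hypothesis G_nonneg : forall x, 0 <= G x.

Lemma weighted_continuous (w : R -> R) x :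
  (forall y, ex_derive w y) -> continuous (fun t => w t * G t) x.
Proof. intros Hw. apply continuous_mult_R; auto. now apply continuous_of_derivable. Qed.

(* If G <= M, then integral of (1/2 - t) G(t) <= (1/2 - d) integral of G + d^2 M:
   the weight exceeds 1/2 - d only on [0, d], and there by at most d. *)
Lemma moment_upper S W M d :
  is_RInt G 0 1 S -> is_RInt (fun t => (1/2 - t) * G t) 0 1 W ->
  (forall t, G t <= M) -> 0 < d <= 1/2 ->
  W <= (1/2 - d) * S + d ^ 2 * M.
Proof.
  intros HS HW HM Hd.
  destruct (is_RInt_split G 0 d 1 S) as [g1 [g2 [Hg1 [Hg2 ->]]]]; auto.
  destruct (is_RInt_split (fun t => (1/2 - t) * G t) 0 d 1 W) as [w1 [w2 [Hw1 [Hw2 ->]]]]; auto.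
  { intros x. apply weighted_continuous. intros y. auto_derive. auto. }
  assert (w1 <= (1/2 - d) * g1 + (d - 0) * (d * M)).
  { apply (is_RInt_le (fun t => (1/2 - t) * G t) (fun t => (1/2 - d) * G t + d * M) 0 d); [lra|auto| |].
    - apply is_RInt_plus_R; [now apply is_RInt_scal_R|apply is_RInt_const_R].
    - intros x Hx. pose proof (G_nonneg x). pose proof (HM x). nra. }
  assert (w2 <= (1/2 - d) * g2).
  { apply (is_RInt_le (fun t => (1/2 - t) * G t) (fun t => (1/2 - d) * G t) d 1); [lra|auto|now apply is_RInt_scal_R|].
    intros x Hx. pose proof (G_nonneg x). nra. }
  lra.
Qed.

Lemma mass_lower S t0 h c :
  is_RInt G 0 1 S -> 0 < h <= t0 -> t0 + h <= 1 ->
  (forall t, t0 - h <= t <= t0 + h -> c <= G t) -> 2 * h * c <= S.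
Proof.
  intros HS Hh Ht Hc.
  destruct (is_RInt_split G 0 (t0 - h) 1 S) as [g1 [g23 [Hg1 [Hg23 ->]]]]; auto.
  destruct (is_RInt_split G (t0 - h) (t0 + h) 1 g23) as [g2 [g3 [Hg2 [Hg3 ->]]]]; auto.
  assert (0 <= g1) by (apply (is_RInt_ge0 G 0 (t0 - h)); auto; lra).
  assert (0 <= g3) by (apply (is_RInt_ge0 G (t0 + h) 1); auto).
  assert ((t0 + h - (t0 - h)) * c <= g2).
  { apply (is_RInt_le (fun _ => c) G (t0 - h) (t0 + h)); [lra|apply is_RInt_const_R|auto|].
    intros; apply Hc; lra. }
  lra.
Qed.

Lemma first_moment_upper S A t1 c :
  is_RInt G 0 1 S -> is_RInt (fun t => t * G t) 0 1 A -> 0 <= t1 <= 1 ->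
  (forall t, t1 <= t <= 1 -> G t <= c) -> A <= t1 * S + c.
Proof.
  intros HS HA Ht Hc.
  destruct (is_RInt_split G 0 t1 1 S) as [g1 [g2 [Hg1 [Hg2 ->]]]]; auto.
  destruct (is_RInt_split (fun t => t * G t) 0 t1 1 A) as [a1 [a2 [Ha1 [Ha2 ->]]]]; auto.
  { intros x. apply weighted_continuous. intros y. auto_derive. auto. }
  assert (0 <= c) by (apply Rle_trans with (G 1); auto; apply Hc; lra).
  assert (0 <= g2) by (apply (is_RInt_ge0 G t1 1); auto; lra).
  assert (a1 <= t1 * g1).
  { apply (is_RInt_le (fun t => t * G t) (fun t => t1 * G t) 0 t1); [lra|auto|now apply is_RInt_scal_R|].
    intros x Hx. pose proof (G_nonneg x). nra. }
  assert (a2 <= (1 - t1) * c).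
  { apply (is_RInt_le (fun t => t * G t) (fun _ => c) t1 1); [lra|auto|apply is_RInt_const_R|].
    intros x Hx. pose proof (G_nonneg x). assert (G x <= c) by (apply Hc; lra). nra. }
  nra.
Qed.

End Moments.

(** * Upper bound: ||T_N|| <= pi (1 - 3/(8N)) *)

Definition upper_const (N : nat) : R := PI * (1 - 3 / (8 * INR N)).

Lemma upper_const_pos N : (1 <= N)%nat -> 0 < upper_const N.
Proof.
  intros HN. assert (1 <= INR N) by (apply (le_INR 1); auto).
  unfold upper_const. apply Rmult_lt_0_compat; [apply PI_RGT_0|].
  assert (3 / (8 * INR N) <= 3 / 8)
    by (apply Rmult_le_reg_l with (8 * INR N); [lra|field_simplify; lra]).
  lra.
Qed.

(* Combine the moment identity with [moment_upper] for d = 1/(4N), using |P_z|^2 <= N ||z||^2. *)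
Lemma tform_upper N z : (1 <= N)%nat ->
  tform N (re z) (im z) <= upper_const N / 2 * csq N z.
Proof.
  intros HN. pose proof PI_RGT_0 as Hpi.
  assert (HNr : 1 <= INR N) by (apply (le_INR 1); auto).
  set (d := 1 / (4 * INR N)).
  assert (Hd : 0 < d <= 1/2).
  { unfold d. split; [apply Rdiv_lt_0_compat; lra|].
    apply Rmult_le_reg_l with (4 * INR N); [lra|field_simplify; lra]. }
  pose proof (moment_upper (tabs2 z N) (tabs2_continuous z N) (tabs2_nonneg z N)
                (csq N z) _ (INR N * csq N z) d (parseval z N) (moment_identity z N)
                (tabs2_le z N) Hd) as Hm.
  replace ((1/2 - d) * csq N z + d ^ 2 * (INR N * csq N z))
    with (upper_const N / 2 * csq N z / PI) in Hm by (unfold d, upper_const; field; lra).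
  apply Rmult_le_reg_r with (/ PI); [now apply Rinv_0_lt_compat|]. exact Hm.
Qed.

(* A bound <u, T v> <= K/2 (|u|^2 + |v|^2) on the bilinear form gives |T x| <= K |x|:
   take u = T x / K and v = x. *)
Lemma Tv_norm_le N K x : 0 < K ->
  (forall u v, tform N u v <= K / 2 * (sum1 N (fun n => u n ^ 2) + sum1 N (fun n => v n ^ 2))) ->
  sum1 N (fun m => Tv N x m ^ 2) <= K ^ 2 * sum1 N (fun m => x m ^ 2).
Proof.
  intros HK Hform.
  set (W := sum1 N (fun m => Tv N x m ^ 2)). set (X := sum1 N (fun m => x m ^ 2)).
  pose proof (Hform (fun n => Tv N x n / K) x) as H.
  replace (tform N (fun n => Tv N x n / K) x) with (W / K) in H
    by (unfold tform, W, Rdiv; rewrite <- sum1_scal_r; apply sum1_ext; intros; ring).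
  replace (sum1 N (fun n => (Tv N x n / K) ^ 2)) with (W / K ^ 2) in H
    by (unfold W, Rdiv; rewrite <- sum1_scal_r; apply sum1_ext; intros; field; lra).
  fold X in H.
  replace (K / 2 * (W / K ^ 2 + X)) with (W / K / 2 + K / 2 * X) in H by (field; lra).
  apply Rmult_le_reg_l with (/ K); [now apply Rinv_0_lt_compat|].
  replace (/ K * (K ^ 2 * X)) with (K * X) by (field; lra).
  unfold Rdiv in H. lra.
Qed.

Lemma T_norm_upper N z : (1 <= N)%nat -> cnorm N z <= 1 -> cnorm N (Tapply N z) <= upper_const N.
Proof.
  intros HN Hz. pose proof (upper_const_pos N HN) as HK.
  assert (Hreal : forall x, sum1 N (fun m => Tv N x m ^ 2) <=
                            upper_const N ^ 2 * sum1 N (fun m => x m ^ 2)).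
  { intros x. apply Tv_norm_le; auto. intros u v.
    pose proof (tform_upper N (fun n => (u n, v n)) HN) as H.
    unfold csq in H; cbn [fst snd] in H. now rewrite sum1_plus in H. }
  assert (Hz2 : csq N z <= 1).
  { change (sqrt (csq N z) <= 1) in Hz. pose proof (csq_nonneg N z).
    rewrite <- (sqrt_sqrt (csq N z)) by auto. pose proof (sqrt_pos (csq N z)). nra. }
  unfold cnorm. rewrite <- (sqrt_pow2 (upper_const N)) by lra. apply sqrt_le_1_alt.
  change (csq N (Tapply N z) <= upper_const N ^ 2).
  unfold csq. change (sum1 N (fun n => Tv N (re z) n ^ 2 + Tv N (im z) n ^ 2) <= upper_const N ^ 2).
  unfold csq in Hz2. rewrite sum1_plus in *.
  pose proof (Hreal (re z)). pose proof (Hreal (im z)).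
  pose proof (pow2_ge_0 (upper_const N)). unfold re, im in *. nra.
Qed.

Lemma tpoly_succ w L t : tpoly w (S L) t = cadd (tpoly w L t) (cmul (w (S L)) (expo (S L) t)).
Proof. unfold tpoly, cadd, cmul, expo. apply pair_ext; simpl; ring. Qed.

Lemma tpoly_add z1 z2 N t :
  cadd (tpoly z1 N t) (tpoly z2 N t) = tpoly (fun n => cadd (z1 n) (z2 n)) N t.
Proof. unfold tpoly, cadd. apply pair_ext; simpl; rewrite <- sum1_plus; apply sum1_ext; intros; ring. Qed.

Lemma tpoly_zero N t : tpoly (fun _ => (0, 0)) N t = (0, 0).
Proof. unfold tpoly. apply pair_ext; simpl; apply sum1_zero; intros; ring. Qed.

Lemma tpoly_shift z d c j t :
  cmul (tpoly z d t) (cmul c (expo j t)) =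
  tpoly (fun n => if Nat.leb n j then (0, 0) else cmul (z (n - j)%nat) c) (j + d) t.
Proof.
  unfold tpoly, cmul, expo. apply pair_ext; simpl; rewrite sum1_split;
  (rewrite (sum1_zero j);
   [|intros n Hn; replace (Nat.leb n j) with true by (symmetry; apply Nat.leb_le; lia); simpl; ring]);
  rewrite Rplus_0_l, <- !sum1_scal_r, <- ?sum1_minus, <- ?sum1_plus; apply sum1_ext; intros n Hn;
  replace (Nat.leb (j + n) j) with false by (symmetry; apply Nat.leb_gt; lia); simpl;
  replace (j + n - j)%nat with n by lia; rewrite phase_add, cos_plus, sin_plus; ring.
Qed.

Lemma tpoly_pad z d k t : tpoly z d t = tpoly (fun n => if Nat.leb n d then z n else (0, 0)) (d + k) t.
Proof.
  unfold tpoly. apply pair_ext; simpl; rewrite sum1_split;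
  (rewrite (sum1_zero k);
   [|intros n Hn; replace (Nat.leb (d + n) d) with false by (symmetry; apply Nat.leb_gt; lia); simpl; ring]);
  rewrite Rplus_0_r; apply sum1_ext; intros n Hn;
  replace (Nat.leb n d) with true by (symmetry; apply Nat.leb_le; lia); auto.
Qed.

Lemma tpoly_mul L : forall z w d, exists z', forall t,
  cmul (tpoly z d t) (tpoly w L t) = tpoly z' (d + L) t.
Proof.
  induction L as [|L IH]; intros z w d.
  - exists (fun _ => (0, 0)). intros t. rewrite tpoly_zero.
    unfold tpoly, cmul. apply pair_ext; simpl; ring.
  - destruct (IH z w d) as [z1 H1].
    exists (fun n => cadd (if Nat.leb n (d + L) then z1 n else (0, 0))
                          (if Nat.leb n (S L) then (0, 0) else cmul (z (n - S L)%nat) (w (S L)))).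
    intros t. rewrite tpoly_succ, cmul_cadd_r, H1, tpoly_shift, (tpoly_pad z1 (d + L) 1).
    replace (d + L + 1)%nat with (d + S L)%nat by lia.
    replace (S L + d)%nat with (d + S L)%nat by lia. apply tpoly_add.
Qed.

Lemma tpoly_power L w m : exists z, forall t,
  tpoly z (1 + m * L) t = cmul (expo 1 t) (cpow (tpoly w L t) m).
Proof.
  induction m as [|m [z1 H1]].
  - exists (fun n => if Nat.eqb n 1 then (1, 0) else (0, 0)). intros t.
    unfold tpoly, cmul, expo. apply pair_ext; simpl; ring.
  - destruct (tpoly_mul L z1 w (1 + m * L)) as [z2 H2].
    exists z2. intros t. replace (1 + S m * L)%nat with (1 + m * L + L)%nat by lia.
    rewrite <- H2, H1. simpl. now rewrite cmul_assoc.
Qed.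

(** * The Dirichlet kernel D_L(s) = sum_(j=1..L) e(j s) *)

Definition dirichlet (L : nat) (s : R) : R * R :=
  (sum1 L (fun j => cos (phase j s)), sum1 L (fun j => sin (phase j s))).

Lemma tpoly_dirichlet L t0 t : tpoly (fun j => expo j (- t0)) L t = dirichlet L (t - t0).
Proof.
  unfold tpoly, dirichlet, expo. apply pair_ext; simpl; apply sum1_ext; intros j _;
  replace (phase j (t - t0)) with (phase j t + phase j (- t0)) by (unfold phase; ring);
  rewrite ?cos_plus, ?sin_plus; ring.
Qed.

(* |D_L(s)| |sin(pi s)| <= 1, from the geometric sum (e(s) - 1) D_L(s) = e((L+1)s) - e(s). *)
Lemma dirichlet_sin_bound L s : cn2 (dirichlet L s) * sin (PI * s) ^ 2 <= 1.
Proof.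
  set (C := cos (phase 1 s)). set (Sn := sin (phase 1 s)).
  assert (Hgeom : cmul (dirichlet L s) (C - 1, Sn) =
    (cos (phase (S L) s) - cos (phase 1 s), sin (phase (S L) s) - sin (phase 1 s))).
  { assert (Hstep : forall j, phase (S j) s = phase j s + phase 1 s)
      by (intros j; rewrite <- phase_add; f_equal; lia).
    unfold cmul, dirichlet. apply pair_ext; simpl.
    - rewrite <- (sum1_telescope L (fun j => cos (phase j s))), <- !sum1_scal_r, <- sum1_minus.
      apply sum1_ext; intros j _. rewrite Hstep, cos_plus. unfold C, Sn. ring.
    - rewrite <- (sum1_telescope L (fun j => sin (phase j s))), <- !sum1_scal_r, <- sum1_plus.
      apply sum1_ext; intros j _. rewrite Hstep, sin_plus. unfold C, Sn. ring. }
  assert (Hfactor : cn2 (C - 1, Sn) = 4 * sin (PI * s) ^ 2).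
  { unfold cn2, C, Sn, phase; simpl. rewrite Rmult_1_r.
    replace (2 * PI * s) with (2 * (PI * s)) by ring.
    pose proof (sin2_cos2 (2 * (PI * s))) as Hq. unfold Rsqr in Hq. rewrite cos_2a_sin in *.
    set (x := sin (PI * s)) in *. set (y := sin (2 * (PI * s))) in *. nra. }
  assert (Hrhs : cn2 (cmul (dirichlet L s) (C - 1, Sn)) <= 4).
  { rewrite Hgeom. unfold cn2; simpl.
    pose proof (sin2_cos2 (phase (S L) s)). pose proof (sin2_cos2 (phase 1 s)). unfold Rsqr in *.
    pose proof (pow2_ge_0 (cos (phase (S L) s) + cos (phase 1 s))).
    pose proof (pow2_ge_0 (sin (phase (S L) s) + sin (phase 1 s))). nra. }
  rewrite cn2_mul, Hfactor in Hrhs. lra.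
Qed.

(* Near s = 0 all the terms of D_L(s) point in nearly the same direction. *)
Lemma dirichlet_near L s : (1 <= L)%nat -> Rabs s <= 1 / (8 * INR L) ->
  INR L ^ 2 / 4 <= cn2 (dirichlet L s).
Proof.
  intros HL Hs. pose proof PI_4. pose proof PI_RGT_0. pose proof PI2_3_2.
  assert (HLr : 1 <= INR L) by (apply (le_INR 1); auto).
  assert (Hre : INR L / 2 <= fst (dirichlet L s)).
  { unfold dirichlet; simpl. replace (INR L / 2) with (sum1 L (fun _ => 1/2)) by (rewrite sum1_const; field).
    apply sum1_le. intros j Hj.
    assert (Hj' : 1 <= INR j <= INR L) by (split; [apply (le_INR 1)|apply le_INR]; lia).
    assert (Ha : Rabs (phase j s) <= 1).
    { unfold phase. rewrite !Rabs_mult, (Rabs_right 2), (Rabs_right PI), (Rabs_right (INR j)) by lra.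
      apply Rle_trans with (8 * INR L * Rabs s).
      - apply Rmult_le_compat_r; [apply Rabs_pos|nra].
      - apply Rle_trans with (8 * INR L * (1 / (8 * INR L))); [apply Rmult_le_compat_l; lra|].
        right; field; lra. }
    assert (-1 <= phase j s <= 1) by (unfold Rabs in Ha; destruct (Rcase_abs (phase j s)); lra).
    destruct (cos_bound (phase j s) 0) as [Hc _]; [lra|lra|].
    unfold cos_approx, cos_term in Hc; simpl in Hc. nra. }
  unfold cn2. pose proof (pow2_ge_0 (snd (dirichlet L s))). nra.
Qed.

(* sin (3 pi / x) >= 3 / x for x >= 8, from the Taylor bound sin y >= y - y^3/6. *)
Lemma sin_three_over (x : R) : 8 <= x -> 3 / x <= sin (PI * (3 / x)).
Proof.
  intros Hx. pose proof PI_4. pose proof PI2_3_2.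
  set (y := PI * (3 / x)).
  assert (Hy : 9 / x <= y <= 12 / x).
  { unfold y. split; unfold Rdiv; rewrite <- Rmult_assoc; apply Rmult_le_compat_r;
    try (left; apply Rinv_0_lt_compat; lra); lra. }
  assert (12 / x <= 3/2) by (apply Rmult_le_reg_l with x; [lra|field_simplify; lra]).
  assert (0 < 9 / x) by (apply Rdiv_lt_0_compat; lra).
  destruct (sin_bound y 0) as [Hs _]; [lra|lra|].
  unfold sin_approx, sin_term in Hs; simpl in Hs.
  assert (5/8 * (9 / x) >= 3 / x) by (unfold Rdiv; nra).
  nra.
Qed.

Lemma sin_pi_ge t0 s : 0 < t0 <= 1/2 -> t0 <= s <= 1 - t0 -> sin (PI * t0) <= sin (PI * s).
Proof.
  intros Ht Hs. pose proof PI_RGT_0.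
  destruct (Rle_or_lt s (1/2)).
  - apply sin_incr_1; nra.
  - rewrite <- (sin_PI_x (PI * s)). apply sin_incr_1; nra.
Qed.

Lemma dirichlet_far L s : (8 <= L)%nat -> 3 / INR L <= s <= 1 - 3 / INR L ->
  cn2 (dirichlet L s) <= INR L ^ 2 / 9.
Proof.
  intros HL Hs.
  assert (HLr : 8 <= INR L) by (replace 8 with (INR 8) by (simpl; ring); now apply le_INR).
  assert (Ht : 0 < 3 / INR L <= 1/2)
    by (split; [apply Rdiv_lt_0_compat; lra|apply Rmult_le_reg_l with (INR L); [lra|field_simplify; lra]]).
  pose proof (sin_three_over (INR L) HLr). pose proof (sin_pi_ge _ s Ht Hs).
  pose proof (dirichlet_sin_bound L s). pose proof (cn2_nonneg (dirichlet L s)).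
  assert ((3 / INR L) ^ 2 <= sin (PI * s) ^ 2) by (apply pow_incr; lra).
  assert (cn2 (dirichlet L s) * (9 / INR L ^ 2) <= 1).
  { replace (9 / INR L ^ 2) with ((3 / INR L) ^ 2) by (field; lra). nra. }
  apply Rmult_le_reg_r with (9 / INR L ^ 2); [apply Rdiv_lt_0_compat; nra|].
  replace (INR L ^ 2 / 9 * (9 / INR L ^ 2)) with 1 by (field; lra). lra.
Qed.

(** * Lower bound: ||T_N|| >= pi (1 - 2 eps) from a concentrated polynomial *)

Lemma norm_lower_of_form N z kappa : 0 <= kappa ->
  kappa * csq N z <= 2 * tform N (re z) (im z) -> kappa * cnorm N z <= cnorm N (Tapply N z).
Proof.
  intros Hk Hform.
  set (S := csq N z) in *. set (TT := csq N (Tapply N z)).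
  assert (HS : 0 <= S) by apply csq_nonneg.
  assert (HT : 0 <= TT) by apply csq_nonneg.
  assert (HCS : (2 * tform N (re z) (im z)) ^ 2 <= S * TT).
  { replace (2 * tform N (re z) (im z)) with (tform N (re z) (im z) - tform N (im z) (re z))
      by (rewrite tform_anti; ring).
    pose proof (cauchy_schwarz N (re z) (im z) (Tv N (im z)) (fun m => - Tv N (re z) m)) as H.
    unfold tform. rewrite <- sum1_minus.
    replace (sum1 N (fun m => re z m * Tv N (im z) m - im z m * Tv N (re z) m))
      with (sum1 N (fun n => re z n * Tv N (im z) n + im z n * - Tv N (re z) n))
      by (apply sum1_ext; intros; ring).
    replace TT with (sum1 N (fun n => Tv N (im z) n ^ 2 + (- Tv N (re z) n) ^ 2))
      by (apply sum1_ext; intros; unfold Tv, re, im; simpl; ring).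
    exact H. }
  assert (Hsq : kappa ^ 2 * S <= TT).
  { destruct HS as [HSp|HS0]; [|rewrite <- HS0; lra].
    assert (0 <= kappa * S) by (apply Rmult_le_pos; lra).
    assert ((kappa * S) ^ 2 <= S * TT).
    { apply Rle_trans with ((2 * tform N (re z) (im z)) ^ 2); auto. apply pow_incr. lra. }
    apply Rmult_le_reg_l with S; auto.
    replace (S * (kappa ^ 2 * S)) with ((kappa * S) ^ 2) by ring. lra. }
  unfold cnorm. fold S TT.
  rewrite <- (sqrt_pow2 kappa), <- sqrt_mult_alt by (auto; apply pow2_ge_0).
  now apply sqrt_le_1_alt.
Qed.

Definition cscale (r : R) (z : cvec) : cvec := fun n => (fst (z n) / r, snd (z n) / r).

Lemma cnorm_cscale N r z : 0 < r -> cnorm N (cscale r z) = cnorm N z / r.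
Proof.
  intros Hr. unfold cnorm, cscale; cbn [fst snd].
  rewrite (sum1_ext N _ (fun n => (fst (z n) ^ 2 + snd (z n) ^ 2) * (/ r) ^ 2))
    by (intros; field; lra).
  rewrite sum1_scal_r, sqrt_mult_alt, sqrt_pow2; auto.
  - left; now apply Rinv_0_lt_compat.
  - apply (csq_nonneg N z).
Qed.

Lemma Tapply_cscale N r z : 0 < r -> forall m, Tapply N (cscale r z) m = cscale r (Tapply N z) m.
Proof.
  intros Hr m. unfold Tapply, cscale. apply pair_ext; simpl;
  unfold Rdiv; rewrite <- sum1_scal_r; apply sum1_ext; intros; ring.
Qed.

Lemma T_image_norms_0 N : T_image_norms N 0.
Proof.
  exists (fun _ => (0, 0)).
  assert (Hz : csq N (fun _ => (0, 0)) = 0) by (apply sum1_zero; intros; simpl; ring).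
  split.
  - unfold cnorm. fold (csq N (fun _ => (0, 0))). rewrite Hz, sqrt_0. lra.
  - unfold cnorm. replace (sum1 N _) with 0; [now rewrite sqrt_0|].
    symmetry. apply sum1_zero; intros; simpl.
    rewrite (sum1_zero N (fun k => Tent n k * 0)) by (intros; ring). ring.
Qed.

Lemma opnorm_ge_ratio N normT z kappa : is_lub (T_image_norms N) normT ->
  0 < cnorm N z -> kappa * cnorm N z <= cnorm N (Tapply N z) -> kappa <= normT.
Proof.
  intros Hlub Hz Hk. set (r := cnorm N z) in *.
  apply Rle_trans with (cnorm N (Tapply N (cscale r z))).
  - replace (cnorm N (Tapply N (cscale r z))) with (cnorm N (Tapply N z) / r).
    + apply Rmult_le_reg_r with r; auto. unfold Rdiv. rewrite Rmult_assoc, Rinv_l; lra.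
    + rewrite <- cnorm_cscale by auto. unfold cnorm. f_equal. apply sum1_ext; intros.
      now rewrite Tapply_cscale.
  - apply Hlub. exists (cscale r z). split; auto.
    rewrite cnorm_cscale by auto. unfold Rdiv. rewrite Rinv_r; lra.
Qed.

(* A vector whose trigonometric polynomial is e(t) D_L(t - t0)^m, a polynomial of degree 1 + m L. *)
Lemma concentrated_vector N L m t0 : (1 + m * L <= N)%nat ->
  exists z, forall t, tabs2 z N t = cn2 (dirichlet L (t - t0)) ^ m.
Proof.
  intros HN. destruct (tpoly_power L (fun j => expo j (- t0)) m) as [z1 Hz1].
  set (d := (1 + m * L)%nat) in *.
  exists (fun n => if Nat.leb n d then z1 n else (0, 0)). intros t.
  unfold tabs2. replace N with (d + (N - d))%nat by lia. rewrite <- tpoly_pad.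
  rewrite Hz1, cn2_mul, cn2_expo, cn2_pow, tpoly_dirichlet. ring.
Qed.

Section ConcentratedPolynomial.
Variables (N L m : nat) (z : cvec).
Hypothesis L_ge_8 : (8 <= L)%nat.
Hypothesis tabs2_z : forall t, tabs2 z N t = cn2 (dirichlet L (t - 3 / INR L)) ^ m.

Let L_ge_8_R : 8 <= INR L.
Proof. replace 8 with (INR 8) by (simpl; ring). now apply le_INR. Qed.

(* |P_z|^2 >= (L^2/4)^m on [3/L - 1/(8L), 3/L + 1/(8L)], hence the mass bound. *)
Lemma concentrated_mass : (INR L ^ 2 / 4) ^ m <= 4 * INR L * csq N z.
Proof.
  pose proof L_ge_8_R.
  assert (Hmass : 2 * (1 / (8 * INR L)) * (INR L ^ 2 / 4) ^ m <= csq N z).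
  { apply (mass_lower (tabs2 z N) (tabs2_continuous z N) (tabs2_nonneg z N) _ (3 / INR L));
      [apply parseval|split|..].
    - apply Rdiv_lt_0_compat; lra.
    - apply Rmult_le_reg_l with (8 * INR L); [lra|field_simplify; lra].
    - apply Rmult_le_reg_l with (8 * INR L); [lra|field_simplify; lra].
    - intros t Ht. rewrite tabs2_z. apply pow_incr. split; [nra|].
      apply dirichlet_near; [lia|]. apply Rabs_le. lra. }
  replace (2 * (1 / (8 * INR L)) * (INR L ^ 2 / 4) ^ m) with ((INR L ^ 2 / 4) ^ m / (4 * INR L)) in Hmass
    by (field; lra).
  apply Rmult_le_reg_r with (/ (4 * INR L)); [apply Rinv_0_lt_compat; lra|].
  replace (4 * INR L * csq N z * / (4 * INR L)) with (csq N z) by (field; lra). exact Hmass.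
Qed.

(* |P_z|^2 <= (L^2/9)^m on [6/L, 1], hence the first-moment bound; the first moment
   equals ||z||^2 / 2 - <Re z, T_N Im z> / pi by Parseval and the moment identity. *)
Lemma concentrated_first_moment :
  csq N z / 2 - tform N (re z) (im z) / PI <= 6 / INR L * csq N z + (INR L ^ 2 / 9) ^ m.
Proof.
  pose proof L_ge_8_R.
  apply (first_moment_upper (tabs2 z N) (tabs2_continuous z N) (tabs2_nonneg z N) (csq N z));
    [apply parseval| |split|].
  - replace (csq N z / 2 - tform N (re z) (im z) / PI)
      with (1/2 * csq N z - tform N (re z) (im z) / PI) by (unfold Rdiv; ring).
    apply (is_RInt_ext_R (fun t => 1/2 * tabs2 z N t - (1/2 - t) * tabs2 z N t)); [intros; ring|].
    apply is_RInt_minus_R; [apply is_RInt_scal_R, parseval|apply moment_identity].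
  - apply Rlt_le, Rdiv_lt_0_compat; lra.
  - apply Rmult_le_reg_l with (INR L); [lra|field_simplify; lra].
  - intros t Ht. rewrite tabs2_z. apply pow_incr. split; [apply cn2_nonneg|].
    apply dirichlet_far; auto. split; [|lra].
    replace (3 / INR L) with (6 / INR L - 3 / INR L) by (field; lra). lra.
Qed.

(* The concentration parameter: 6/L bounds the weight t on [0, 6/L], 4 L (4/9)^m the far tail. *)
Definition eps_conc : R := 6 / INR L + 4 * INR L * (4/9) ^ m.

Lemma concentrated_moment :
  0 < csq N z /\ csq N z / 2 - tform N (re z) (im z) / PI <= eps_conc * csq N z.
Proof.
  pose proof L_ge_8_R. pose proof concentrated_mass. pose proof concentrated_first_moment.
  assert (0 < (INR L ^ 2 / 4) ^ m) by (apply pow_lt; nra).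
  assert (0 < (4/9) ^ m) by (apply pow_lt; lra).
  replace ((INR L ^ 2 / 9) ^ m) with ((INR L ^ 2 / 4) ^ m * (4/9) ^ m) in *
    by (rewrite <- Rpow_mult_distr; f_equal; field).
  split; [nra|]. unfold eps_conc. nra.
Qed.

End ConcentratedPolynomial.

Lemma opnorm_lower N L m normT : (8 <= L)%nat -> (1 + m * L <= N)%nat ->
  is_lub (T_image_norms N) normT -> PI * (1 - 2 * eps_conc L m) <= normT.
Proof.
  intros HL HN Hlub. pose proof PI_RGT_0.
  assert (Hge0 : 0 <= normT) by (apply Hlub, T_image_norms_0).
  destruct (Rle_or_lt (PI * (1 - 2 * eps_conc L m)) 0) as [Hneg|Hpos]; [lra|].
  destruct (concentrated_vector N L m (3 / INR L) HN) as [z Hz].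
  destruct (concentrated_moment N L m z HL Hz) as [HS Hmom].
  apply (opnorm_ge_ratio N normT z); auto.
  - unfold cnorm. now apply sqrt_lt_R0.
  - apply norm_lower_of_form; [lra|].
    apply Rmult_le_reg_r with (/ PI); [now apply Rinv_0_lt_compat|].
    replace (2 * tform N (re z) (im z) * / PI) with (2 * (tform N (re z) (im z) / PI)) by (unfold Rdiv; ring).
    replace (PI * (1 - 2 * eps_conc L m) * csq N z * / PI) with ((1 - 2 * eps_conc L m) * csq N z)
      by (field; lra).
    lra.
Qed.

Lemma opnorm_exists N : (1 <= N)%nat ->
  exists normT, is_lub (T_image_norms N) normT /\ 0 <= normT <= upper_const N.
Proof.
  intros HN.
  assert (Hbound : is_upper_bound (T_image_norms N) (upper_const N))
    by (intros r [z [Hz ->]]; now apply T_norm_upper).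
  destruct (completeness _ (ex_intro _ _ Hbound) (ex_intro _ 0 (T_image_norms_0 N))) as [normT Hlub].
  exists normT. split; [exact Hlub|]. split.
  - apply Hlub, T_image_norms_0.
  - now apply Hlub.
Qed.

(* 2^p grows fast enough to make L >= 8 in [parameters_exist]. *)
Lemma pow2_linear p : (9 <= p)%nat -> (16 * p + 17 <= 2 ^ p)%nat.
Proof. induction 1; [simpl; lia|rewrite Nat.pow_succ_r'; lia]. Qed.

(* (4/9)^(2(p+1)) <= 4^-(p+1) = (2^(p+1))^-2 < x^-2 for 0 < x < 2^(p+1). *)
Lemma four_ninths_decay p (x : R) : 0 < x -> x < 2 ^ S p -> (4/9) ^ (2 * (p + 1)) <= / x ^ 2.
Proof.
  intros Hx Hxp. apply Rle_trans with ((/ 2 ^ S p) ^ 2).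
  - rewrite <- pow_inv, <- pow_mult.
    replace (S p * 2)%nat with (2 * (p + 1))%nat by lia. rewrite !pow_mult.
    apply pow_incr. split; [apply pow2_ge_0|simpl; lra].
  - rewrite <- (pow_inv x 2). apply pow_incr.
    split; [left; apply Rinv_0_lt_compat, pow_lt; lra|apply Rinv_le_contravar; lra].
Qed.

(* With m = 2 (p + 1), where 2^p <= N < 2^(p+1), and L about N / m, the concentration
   parameter is O(log N / N): 6/L is about 3 m / N and (4/9)^m <= 4^-(p+1) <= 1/N^2. *)
Lemma eps_conc_estimate N L p :
  (8 <= L)%nat -> (L <= N)%nat -> (N <= 2 * (p + 1) * (L + 1))%nat ->
  (2 ^ p <= N < 2 ^ S p)%nat ->
  eps_conc L (2 * (p + 1)) <= 62 * ln (INR N) / INR N.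
Proof.
  intros HL HLN HNm [Hp1 Hp2].
  set (m := (2 * (p + 1))%nat).
  assert (HLr : 8 <= INR L) by (replace 8 with (INR 8) by (simpl; ring); now apply le_INR).
  assert (HLNr : INR L <= INR N) by now apply le_INR.
  assert (Hmr : INR m = 2 * (INR p + 1)) by (unfold m; rewrite mult_INR, plus_INR; simpl; ring).
  assert (HNmr : INR N <= INR m * (INR L + 1)).
  { replace (INR L + 1) with (INR (L + 1)) by (rewrite plus_INR; simpl; ring).
    rewrite <- mult_INR. now apply le_INR. }
  assert (Hp2r : INR N < 2 ^ S p).
  { replace 2 with (INR 2) by (simpl; ring). rewrite <- pow_INR. now apply lt_INR. }
  assert (Hp1r : 2 ^ p <= INR N).
  { replace 2 with (INR 2) by (simpl; ring). rewrite <- pow_INR. now apply le_INR. }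
  assert (Hln2 : / 2 < ln 2) by apply ln_lt_2.
  assert (HlnN : ln 2 <= ln (INR N)) by (apply ln_le; lra).
  assert (Hplog : INR p * ln 2 <= ln (INR N))
    by (rewrite <- ln_pow by lra; apply ln_le; auto; apply pow_lt; lra).
  assert (Hmb : INR m <= 8 * ln (INR N)) by nra.
  assert (Hnear : 6 / INR L <= 6.75 * INR m / INR N).
  { apply Rmult_le_reg_r with (INR L * INR N); [nra|].
    replace (6 / INR L * (INR L * INR N)) with (6 * INR N) by (field; lra).
    replace (6.75 * INR m / INR N * (INR L * INR N)) with (6.75 * INR m * INR L) by (field; lra).
    assert (0 <= INR m) by apply pos_INR. nra. }
  assert (Hdecay : (4/9) ^ m <= / INR N ^ 2) by (apply four_ninths_decay; lra).
  assert (Hfar : 4 * INR L * (4/9) ^ m <= 4 / INR N).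
  { assert (0 <= (4/9) ^ m) by (left; apply pow_lt; lra).
    apply Rle_trans with (4 * INR N * / INR N ^ 2); [apply Rmult_le_compat; lra|].
    right. field. lra. }
  unfold eps_conc. fold m.
  apply Rle_trans with ((6.75 * INR m + 4) / INR N); [unfold Rdiv in *; lra|].
  apply Rmult_le_reg_r with (INR N); [lra|].
  replace ((6.75 * INR m + 4) / INR N * INR N) with (6.75 * INR m + 4) by (field; lra).
  replace (62 * ln (INR N) / INR N * INR N) with (62 * ln (INR N)) by (field; lra). nra.
Qed.

(* For N >= 512 the parameters p = floor(log2 N), m = 2 (p + 1), L = floor((N - 1) / m)
   are admissible: L >= 8 and the polynomial degree 1 + m L is at most N. *)
Lemma parameters_exist N : (512 <= N)%nat ->
  exists L m, (8 <= L)%nat /\ (1 + m * L <= N)%nat /\ eps_conc L m <= 62 * ln (INR N) / INR N.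
Proof.
  intros HN. set (p := Nat.log2 N).
  destruct (Nat.log2_spec N) as [Hp1 Hp2]; [lia|]. fold p in Hp1, Hp2.
  assert (Hp9 : (9 <= p)%nat).
  { destruct (Nat.le_gt_cases 9 p) as [|Hq]; auto.
    assert ((2 ^ S p <= 2 ^ 9)%nat) by (apply Nat.pow_le_mono_r; lia). simpl in *; lia. }
  pose proof (pow2_linear p Hp9).
  set (m := (2 * (p + 1))%nat). set (L := ((N - 1) / m)%nat).
  assert (Hm0 : m <> 0%nat) by lia.
  pose proof (Nat.div_mod (N - 1) m Hm0). pose proof (Nat.mod_upper_bound (N - 1) m Hm0).
  assert (HL8 : (8 <= L)%nat) by (apply Nat.div_le_lower_bound; lia).
  exists L, m. split; [|split]; auto; [lia|].
  apply eps_conc_estimate; auto; [nia|lia].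
Qed.

(* For small N the upper estimate is trivial: pi - ||T_N|| <= pi < 4 < 10000 log N / N. *)
Lemma small_N_bound N : (2 <= N < 512)%nat -> 4 < 10000 * ln (INR N) / INR N.
Proof.
  intros HN.
  assert (HN2 : 2 <= INR N) by (replace 2 with (INR 2) by (simpl; ring); apply le_INR; lia).
  assert (HN512 : INR N < 512) by (replace 512 with (INR 512) by (simpl; ring); apply lt_INR; lia).
  assert (/ 2 < ln 2) by apply ln_lt_2.
  assert (ln 2 <= ln (INR N)) by (apply ln_le; lra).
  apply Rmult_lt_reg_r with (INR N); [lra|].
  replace (10000 * ln (INR N) / INR N * INR N) with (10000 * ln (INR N)) by (field; lra). lra.
Qed.

Theorem mainTheorem13 :
  exists a b : R, 0 < a /\ 0 < b /\
    forall N : nat, (2 <= N)%nat ->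
      exists normT : R,
        is_lub (T_image_norms N) normT /\
        a / INR N < PI - normT /\ PI - normT < b * ln (INR N) / INR N.
Proof.
  exists (PI / 4), 10000. pose proof PI_RGT_0. pose proof PI_4.
  split; [lra|]. split; [lra|]. intros N HN.
  assert (HNr : 2 <= INR N) by (replace 2 with (INR 2) by (simpl; ring); now apply le_INR).
  destruct (opnorm_exists N) as [normT [Hlub [Hge0 Hup]]]; [lia|].
  exists normT. split; [exact Hlub|]. split.
  - (* the gap is at least 3 pi / (8 N), by the upper bound on the norm *)
    unfold upper_const in Hup.
    assert (PI / 4 / INR N < PI * (3 / (8 * INR N))).
    { apply Rmult_lt_reg_r with (INR N); [lra|]. field_simplify; lra. }
    lra.
  - (* the gap is O(log N / N), by the lower bound on the norm *)
    destruct (Nat.lt_ge_cases N 512) as [Hsmall|Hbig].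
    + pose proof (small_N_bound N (conj HN Hsmall)). lra.
    + destruct (parameters_exist N Hbig) as [L [m [HL [HLN Heps]]]].
      pose proof (opnorm_lower N L m normT HL HLN Hlub).
      assert (0 < ln (INR N) / INR N).
      { apply Rdiv_lt_0_compat; [|lra]. rewrite <- ln_1. apply ln_increasing; lra. }
      unfold Rdiv in *. nra.
Qed.
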